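(* Let $N,M\ge 1$. Consider the coupled (single-topic) user–creator opinion dynamics $$\mathbf u^{t+1}=(I_N-\Lambda)A\,\mathbf u^{t}+\Lambda\,\mathbf u^{0}+(I_N-\Lambda)B\,\mathbf c^{t},\qquad \mathbf c^{t+1}=(I_M-\Gamma)E\,\mathbf c^{t}+\Gamma\,\mathbf c^{0}+(I_M-\Gamma)C\,\mathbf u^{t},\qquad t=0,1,2,\dots$$ with $\mathbf u^0\in[-1,1]^N$, $\mathbf c^0\in[-1,1]^M$ and with the matrices satisfying the standing assumptions described in the context (in particular, a static user partition). Then the users' opinions reach a steady state: there exists $\mathbf u^*\in\mathbb R^N$ such that $\lim_{t\to\infty}\mathbf u^t=\mathbf u^*$. Moreover, for every user $i\in\{1,\dots,N\}$, the influence of the social network on user $i$, namely $\sum_{j}A_{ij}$, and the influence of the recommended content on user $i$, namely $B_i:=\sum_{j}B_{ij}$, on $\mathbf u^*$ are complementary: $\sum_j A_{ij}+B_i=1$, so increasing one decreases the other.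
   Context: $\mathbf u^t=(u^t_1,\dots,u^t_N)^\top$ collects the opinions of $N$ users and $\mathbf c^t=(c^t_1,\dots,c^t_M)^\top$ those of $M$ content creators at time $t$. Standing assumptions: $\Lambda$ is an $N\times N$ diagonal matrix with diagonal entries $\lambda_i\in(0,1]$ (user stubbornness); $A\in[0,1]^{N\times N}$ is the (sub-stochastic) adjacency matrix of the users' social network, with nonzero diagonal entries ($A_{ij}>0$ means user $j$ influences user $i$). The user partition is static: each user $i$ is assigned to exactly one creator $j(i)$ (the set $\mathcal F_j$ of users consuming creator $j$ does not change over time). $B\in[0,1]^{N\times M}$ satisfies $B_{ij}=0$ whenever $j\neq j(i)$, and $[A\;B]\mathbf 1_{N+M}=\mathbf 1_N$, i.e. $\sum_j A_{ij}+\sum_j B_{ij}=1$ for each $i$. $\Gamma, E\in[0,1]^{M\times M}$ are diagonal matrices (creator stubbornness and creator self-influence), and $C\in[0,1]^{M\times N}$ satisfies $C_{ji}=0$ unless $i\in\mathcal F_j$, with $[E\;C]\mathbf 1_{M+N}=\mathbf 1_M$, i.e. $E_{jj}+\sum_i C_{ji}=1$ for each $j$. *)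

From HB Require Import structures.
From mathcomp Require Import all_boot all_order all_algebra.
From mathcomp Require Export all_classical all_reals all_analysis.
Set Implicit Arguments. Unset Strict Implicit. Unset Printing Implicit Defensive.
Import Order.TTheory GRing.Theory Num.Theory.
Local Open Scope ring_scope.

Definition diag_matrix (R : ringType) (n : nat) (D : 'M[R]_n) : Prop :=
  forall i j : 'I_n, i != j -> D i j = 0.

From HB Require Import structures.
From mathcomp Require Import all_boot all_order all_algebra.
From mathcomp Require Import all_classical all_reals all_analysis.
From mathcomp Require Import ring lra.
Import Order.TTheory GRing.Theory Num.Theory numFieldNormedType.Exports.
Local Open Scope classical_set_scope.
Local Open Scope ring_scope.

Set Implicit Arguments.
Unset Strict Implicit.
Unset Printing Implicit Defensive.

(* The increments du_t = u_(t+1) - u_t and dc_t = c_(t+1) - c_t follow the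
   homogeneous dynamics
   du' = (I - Lam)(A du + B dc),  dc' = (I - Gam)(E dc + C du).
   Users are strictly stubborn and [A B] is row-stochastic, so in sup norm
   |du'| <= m max(|du|, |dc|) for some m < 1.  A creator's increment is a convex
   combination of its own and its users' increments, so
   |dc'| <= m max(|du|, |dc|) + (1 - m) |du|, and over two steps both norms
   shrink by m (2 - m) < 1 (creators with Gam_jj = 0 and E_jj = 1 ignore their
   users and never move).  The increments thus decay geometrically and u_t is
   Cauchy. *)

(* [mx_complete] is not inherited by the normed-module structure on matrices. *)
HB.instance Definition _ (R : realType) (m n : nat) :=
  Uniform_isComplete.Build 'M[R]_(m, n) (@mx_complete R m n).

Lemma cvg_geometric_telescope (R : realType) (V : completeNormedModType R)
    (u : nat -> V) (K r : R) :
  0 <= r < 1 -> (forall t, `|telescope u t| <= K * r ^+ t) -> cvgn u.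
Proof.
move=> /andP[r_ge0 r_lt1] u_le.
have cvg_series : cvgn (series (telescope u)).
  apply/normed_cvg/(@series_le_cvg _ _ (geometric K r)) => // [t|t|].
  - exact: normr_ge0.
  - exact: le_trans (normr_ge0 _) (u_le t).
  - by apply: is_cvg_geometric_series; rewrite ger0_norm.
rewrite (_ : u = fun t => u 0%N + series (telescope u) t).
  exact: is_cvgD (is_cvg_cst _) cvg_series.
by apply/funext => t; rewrite -eq_sum_telescope.
Qed.

Lemma geometric_decay_two_step {R : realFieldType} (w : nat -> R) (q : R) :
    0 <= q < 1 -> (forall t, 0 <= w t) ->
    (forall t, w t.+1 <= w t) -> (forall t, w t.+2 <= q * w t) ->
  exists K r : R, 0 <= r < 1 /\ forall t, w t <= K * r ^+ t.
Proof.
move=> /andP[q_ge0 q_lt1] w_ge0 w_step1 w_step2.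
pose r := (1 + q) / 2.
have r_gt0 : 0 < r by rewrite /r; lra.
have r_lt1 : r < 1 by rewrite /r; lra.
have q_le_r2 : q <= r * r by rewrite /r; nra.
exists (w 0%N / r), r; split; first by rewrite ltW.
suff w_le2 t : w t <= w 0%N / r * r ^+ t /\ w t.+1 <= w 0%N / r * r ^+ t.+1.
  by move=> t; case: (w_le2 t).
elim: t => [|t [IH0 IH1]].
  rewrite expr0 mulr1 expr1 divfK ?gt_eqF // ler_pdivlMr //.
  by split; [have := w_ge0 0%N; nra | exact: w_step1].
split=> //; apply: le_trans (w_step2 t) _.
have -> : w 0%N / r * r ^+ t.+2 = r * r * (w 0%N / r * r ^+ t).
  by rewrite !exprS; ring.
have := w_ge0 t; nra.
Qed.

Lemma coupled_contraction_decay {R : realFieldType} (m : R) (x y : nat -> R) :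
    0 <= m < 1 -> (forall t, 0 <= x t) -> (forall t, 0 <= y t) ->
    (forall t, x t.+1 <= m * Num.max (x t) (y t)) ->
    (forall t, y t.+1 <= m * Num.max (x t) (y t) + (1 - m) * x t) ->
  exists K r : R, 0 <= r < 1 /\ forall t, x t <= K * r ^+ t.
Proof.
move=> /andP[m_ge0 m_lt1] x_ge0 y_ge0 x_step y_step.
pose w t := Num.max (x t) (y t).
have x_le_w t : x t <= w t by rewrite le_max lexx.
have y_le_w t : y t <= w t by rewrite le_max lexx orbT.
have w_step1 t : w t.+1 <= w t.
  rewrite ge_max; have := x_step t; have := y_step t; have := x_le_w t.
  have := x_ge0 t; rewrite -/(w t); nra.
have w_step2 t : w t.+2 <= m * (2 - m) * w t.
  rewrite ge_max; have := x_step t.+1; have := y_step t.+1; have := x_step t.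
  have := w_step1 t; have := x_ge0 t.+1; have := x_ge0 t; have := y_ge0 t.
  rewrite -/(w t) -/(w t.+1); nra.
have q_01 : 0 <= m * (2 - m) < 1 by apply/andP; split; nra.
have w_ge0 t : 0 <= w t := le_trans (x_ge0 t) (x_le_w t).
have [K [r [r_01 w_le]]] := geometric_decay_two_step q_01 w_ge0 w_step1 w_step2.
by exists K, r; split=> // t; apply: le_trans (x_le_w t) (w_le t).
Qed.

Lemma diag_mulmxE (R : ringType) n p (D : 'M[R]_n) (X : 'M[R]_(n, p)) i j :
  diag_matrix D -> (D *m X) i j = D i i * X i j.
Proof.
move=> D_diag; rewrite mxE (bigD1 i) //= big1 ?addr0 // => k k_neq_i.
by rewrite D_diag ?mul0r // eq_sym.
Qed.

Lemma diag_matrix1B (R : ringType) n (D : 'M[R]_n) :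
  diag_matrix D -> diag_matrix (1%:M - D).
Proof.
by move=> D_diag i j i_neq_j; rewrite !mxE (negbTE i_neq_j) D_diag ?subr0.
Qed.

Lemma diag1B_mulmxE (R : ringType) n p (D : 'M[R]_n) (X : 'M[R]_(n, p)) i j :
  diag_matrix D -> ((1%:M - D) *m X) i j = (1 - D i i) * X i j.
Proof.
by move=> D_diag; rewrite (diag_mulmxE _ _ _ (diag_matrix1B D_diag)) !mxE eqxx.
Qed.

Lemma mx_entry_le_norm (R : realDomainType) m n (x : 'M[R]_(m, n)) i j :
  `|x i j| <= `|x|.
Proof.
rewrite [leRHS]/Num.Def.normr /= mx_normrE.
by apply/bigmax_geP; right; exists (i, j).
Qed.

Lemma mx_norm_le (R : realDomainType) m n (x : 'M[R]_(m, n)) (b : R) :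
  0 <= b -> (forall i j, `|x i j| <= b) -> `|x| <= b.
Proof.
move=> b_ge0 x_le; rewrite [leLHS]/Num.Def.normr /= mx_normrE.
by apply: bigmax_le => // -[i j] _; exact: x_le.
Qed.

Lemma norm_mulmx_entry_le (R : realDomainType) n p q (P : 'M[R]_(n, p))
    (x : 'M[R]_(p, q)) i j :
  (forall k, 0 <= P i k) -> `|(P *m x) i j| <= (\sum_k P i k) * `|x|.
Proof.
move=> P_ge0; rewrite mxE mulr_suml; apply: le_trans (ler_norm_sum _ _ _) _.
apply: ler_sum => k _; rewrite normrM ger0_norm //.
exact: ler_wpM2l (mx_entry_le_norm _ _ _).
Qed.

Lemma finite_lt1_bound (R : realDomainType) (I : finType) (P : pred I)
    (x : I -> R) :
  (forall i, P i -> x i < 1) ->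
  exists2 m : R, 0 <= m < 1 & forall i, P i -> x i <= m.
Proof.
move=> x_lt1; exists (\big[Num.max/0]_(i | P i) x i); last first.
  by move=> i Pi; rewrite (le_bigmax_cond _ _ Pi).
by rewrite bigmax_ge_id /=; apply/bigmax_ltP.
Qed.

Lemma telescope_affine_rec (R : ringType) n p q (P : 'M[R]_n)
    (Q : 'M[R]_(n, p)) (b : 'M[R]_(n, q))
    (x : nat -> 'M[R]_(n, q)) (y : nat -> 'M[R]_(p, q)) :
  (forall t, x t.+1 = P *m x t + b + Q *m y t) ->
  forall t, telescope x t.+1 = P *m telescope x t + Q *m telescope y t.
Proof.
move=> x_rec t; rewrite /telescope /= !mulmxBr (x_rec t.+1) {2}(x_rec t).
by rewrite !(addrAC _ b) opprD addrA subrK opprD addrACA.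
Qed.

Section CoupledDynamics.
Variables (R : realType) (N M : nat).
Variables (Lam A : 'M[R]_N) (B : 'M[R]_(N, M)).
Variables (Gam E : 'M[R]_M) (C : 'M[R]_(M, N)).
Variables (u : nat -> 'cV[R]_N) (c : nat -> 'cV[R]_M).

Hypothesis Lam_diag : diag_matrix Lam.
Hypothesis Lam_01 : forall i, 0 < Lam i i <= 1.
Hypothesis A_ge0 : forall i k, 0 <= A i k.
Hypothesis B_ge0 : forall i k, 0 <= B i k.
Hypothesis AB_stochastic : forall i, \sum_k A i k + \sum_k B i k = 1.
Hypothesis Gam_diag : diag_matrix Gam.
Hypothesis Gam_01 : forall j, 0 <= Gam j j <= 1.
Hypothesis E_diag : diag_matrix E.
Hypothesis E_01 : forall j, 0 <= E j j <= 1.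
Hypothesis C_ge0 : forall j k, 0 <= C j k.
Hypothesis EC_stochastic : forall j, E j j + \sum_k C j k = 1.
Hypothesis u_rec : forall t,
  u t.+1 = (1%:M - Lam) *m A *m u t + Lam *m u 0%N + (1%:M - Lam) *m B *m c t.
Hypothesis c_rec : forall t,
  c t.+1 = (1%:M - Gam) *m E *m c t + Gam *m c 0%N + (1%:M - Gam) *m C *m u t.

Lemma telescope_u_rec t : telescope u t.+1 =
  (1%:M - Lam) *m (A *m telescope u t + B *m telescope c t).
Proof. by rewrite mulmxDr !mulmxA; exact: telescope_affine_rec u_rec t. Qed.

Lemma telescope_c_rec t : telescope c t.+1 =
  (1%:M - Gam) *m (E *m telescope c t + C *m telescope u t).
Proof. by rewrite mulmxDr !mulmxA; exact: telescope_affine_rec c_rec t. Qed.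

Lemma c_rec_entry t j : c t.+1 j 0 =
  (1 - Gam j j) * (E j j * c t j 0 + (C *m u t) j 0) + Gam j j * c 0%N j 0.
Proof.
rewrite c_rec -!mulmxA mxE [X in X + _]mxE.
by rewrite !diag1B_mulmxE // !diag_mulmxE //; ring.
Qed.

Lemma stuck_creator_telescope_eq0 j :
  1 <= (1 - Gam j j) * E j j -> forall t, telescope c t j 0 = 0.
Proof.
move=> stuck t; have /andP[Gam_j_ge0 Gam_j_le1] := Gam_01 j.
have /andP[E_j_ge0 E_j_le1] := E_01 j.
have GE_ge0 := mulr_ge0 Gam_j_ge0 E_j_ge0.
have E_j1 : E j j = 1 by move: stuck; rewrite mulrBl mul1r; lra.
have Gam_j0 : Gam j j = 0 by move: stuck; rewrite E_j1 mulr1; lra.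
have C_j0 k : C j k = 0.
  have C_j_sum0 : \sum_k C j k = 0.
    by have := EC_stochastic j; rewrite E_j1; lra.
  exact: (psumr_eq0P (fun k _ => C_ge0 j k) C_j_sum0).
have C_j_mul0 : (C *m u t) j 0 = 0.
  by rewrite mxE big1 // => k _; rewrite C_j0 mul0r.
by rewrite /telescope /= mxE c_rec_entry C_j_mul0 Gam_j0 E_j1 mxE; ring.
Qed.

Lemma norm_telescope_u_le m : 0 <= m -> (forall i, 1 - Lam i i <= m) ->
  forall t,
    `|telescope u t.+1| <= m * Num.max `|telescope u t| `|telescope c t|.
Proof.
move=> m_ge0 Lam_le_m t; set W := Num.max _ _.
have W_ge0 : 0 <= W by rewrite le_max normr_ge0.
apply: mx_norm_le => [|i j]; first exact: mulr_ge0.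
have /andP[_ Lam_i_le1] := Lam_01 i.
rewrite telescope_u_rec diag1B_mulmxE // normrM ger0_norm ?subr_ge0 //.
apply: ler_pM; rewrite ?subr_ge0 //.
rewrite mxE -[W]mul1r -(AB_stochastic i) mulrDl.
apply: le_trans (ler_normD _ _) (lerD _ _).
- apply: le_trans (norm_mulmx_entry_le _ _ (A_ge0 i)) _.
  by rewrite ler_wpM2l ?sumr_ge0 ?le_max ?lexx.
- apply: le_trans (norm_mulmx_entry_le _ _ (B_ge0 i)) _.
  by rewrite ler_wpM2l ?sumr_ge0 ?le_max ?lexx ?orbT.
Qed.

Lemma norm_telescope_c_le m : 0 <= m -> m <= 1 ->
    (forall j, (1 - Gam j j) * E j j < 1 -> (1 - Gam j j) * E j j <= m) ->
  forall t, `|telescope c t.+1| <=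
    m * Num.max `|telescope u t| `|telescope c t| + (1 - m) * `|telescope u t|.
Proof.
move=> m_ge0 m_le1 f_le_m t.
set U := `|telescope u t|; set V := `|telescope c t|; set W := Num.max U V.
have U_ge0 : 0 <= U := normr_ge0 _.
have U_le_W : U <= W by rewrite le_max lexx.
have V_le_W : V <= W by rewrite le_max lexx orbT.
have bound_ge0 : 0 <= m * W + (1 - m) * U by have := le_trans U_ge0 U_le_W; nra.
apply: mx_norm_le => // j k.
rewrite (ord1 k).
have [f_lt1|stuck] := ltP ((1 - Gam j j) * E j j) 1; last first.
  by rewrite stuck_creator_telescope_eq0 // normr0.
have /andP[Gam_j_ge0 Gam_j_le1] := Gam_01 j.
have /andP[E_j_ge0 E_j_le1] := E_01 j.
have f_j_le_m := f_le_m j f_lt1.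
have C_term : `|(C *m telescope u t) j 0| <= (1 - E j j) * U.
  have -> : 1 - E j j = \sum_k C j k by have := EC_stochastic j; lra.
  exact: norm_mulmx_entry_le _ _ (C_ge0 j).
have E_term : `|E j j * telescope c t j 0| <= E j j * V.
  by rewrite normrM ger0_norm // ler_wpM2l // mx_entry_le_norm.
rewrite telescope_c_rec diag1B_mulmxE // normrM ger0_norm ?subr_ge0 //.
rewrite mxE diag_mulmxE //.
apply: le_trans (ler_wpM2l _ (le_trans (ler_normD _ _) (lerD E_term C_term))) _.
  by rewrite subr_ge0.
have f_ge0 : 0 <= (1 - Gam j j) * E j j by rewrite mulr_ge0 ?subr_ge0.
have : 0 <= (m - (1 - Gam j j) * E j j) * (W - U) by rewrite mulr_ge0 ?subr_ge0.
have : 0 <= (1 - Gam j j) * E j j * (W - V) by rewrite mulr_ge0 ?subr_ge0.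
have := mulr_ge0 Gam_j_ge0 U_ge0.
lra.
Qed.

Lemma cvg_users : cvgn u.
Proof.
have Lam_lt1 i : 1 - Lam i i < 1 by have /andP[] := Lam_01 i; lra.
have [m1 /andP[m1_ge0 m1_lt1] Lam_le_m1] :=
  @finite_lt1_bound _ _ predT _ (fun i _ => Lam_lt1 i).
have [m2 /andP[m2_ge0 m2_lt1] f_le_m2] :=
  @finite_lt1_bound _ _ (fun j => (1 - Gam j j) * E j j < 1) _
    (fun j f_lt1 => f_lt1).
pose m := Num.max m1 m2.
have m_ge0 : 0 <= m by rewrite le_max m1_ge0.
have m_01 : 0 <= m < 1 by rewrite m_ge0 gt_max m1_lt1.
have Lam_le_m i : 1 - Lam i i <= m by rewrite le_max Lam_le_m1.
have f_le_m j : (1 - Gam j j) * E j j < 1 -> (1 - Gam j j) * E j j <= m.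
  by move=> f_lt1; rewrite le_max (f_le_m2 j f_lt1) orbT.
have [K [r [r_01 u_le]]] := coupled_contraction_decay
  (x := fun t => `|telescope u t|) (y := fun t => `|telescope c t|)
  m_01 (fun t => normr_ge0 _) (fun t => normr_ge0 _)
  (norm_telescope_u_le m_ge0 Lam_le_m)
  (norm_telescope_c_le m_ge0 (ltW (andP m_01).2) f_le_m).
exact: cvg_geometric_telescope r_01 u_le.
Qed.

End CoupledDynamics.

Theorem theorem1 (R : realType) (N M : nat) (hN : (0 < N)%N) (hM : (0 < M)%N)
  (Lam : 'M[R]_N) (A : 'M[R]_N) (B : 'M[R]_(N, M))
  (Gam : 'M[R]_M) (E : 'M[R]_M) (C : 'M[R]_(M, N))
  (part : 'I_N -> 'I_M)
  (u : nat -> 'cV[R]_N) (c : nat -> 'cV[R]_M)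
  (* Lambda: diagonal, entries in (0,1] *)
  (hLd : diag_matrix Lam)
  (hL : forall i, 0 < Lam i i <= 1)
  (* A: entries in [0,1], nonzero diagonal *)
  (hA : forall i j, 0 <= A i j <= 1)
  (hAd : forall i, A i i != 0)
  (* B: entries in [0,1], supported on the static partition *)
  (hB : forall i j, 0 <= B i j <= 1)
  (hBp : forall i j, j != part i -> B i j = 0)
  (hAB : forall i, \sum_j A i j + \sum_j B i j = 1)
  (* Gamma, E: diagonal with entries in [0,1] *)
  (hGd : diag_matrix Gam) (hG : forall j k, 0 <= Gam j k <= 1)
  (hEd : diag_matrix E) (hE : forall j k, 0 <= E j k <= 1)
  (* C: entries in [0,1], C j i = 0 unless user i consumes creator j *)
  (hC : forall j i, 0 <= C j i <= 1)
  (hCp : forall j i, part i != j -> C j i = 0)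
  (hEC : forall j, E j j + \sum_i C j i = 1)
  (* initial opinions in [-1,1] *)
  (hu0 : forall i, -1 <= u 0%N i 0 <= 1)
  (hc0 : forall j, -1 <= c 0%N j 0 <= 1)
  (* dynamics *)
  (hu : forall t, u t.+1 = (1%:M - Lam) *m A *m u t + Lam *m u 0%N
                           + (1%:M - Lam) *m B *m c t)
  (hc : forall t, c t.+1 = (1%:M - Gam) *m E *m c t + Gam *m c 0%N
                           + (1%:M - Gam) *m C *m u t) :
  (exists ustar : 'cV[R]_N, u @ \oo --> ustar) /\
  (forall i : 'I_N, \sum_j A i j + \sum_j B i j = 1).
Proof.
split; last exact: hAB.
have A_ge0 i k : 0 <= A i k by case/andP: (hA i k).
have B_ge0 i k : 0 <= B i k by case/andP: (hB i k).
have C_ge0 j k : 0 <= C j k by case/andP: (hC j k).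
have u_cvg := cvg_users hLd hL A_ge0 B_ge0 hAB hGd (fun j => hG j j) hEd
  (fun j => hE j j) C_ge0 hEC hu hc.
by exists (limn u).
Qed.
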